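(* Let $G'$ be a connected graph, let $w$ be a vertex of $G'$, let $k\ge 2$, and let $G$ be obtained from $G'$ by adding $k$ new vertices, each adjacent only to $w$. Let $\Delta$ be the distance squared matrix of $G$ and $\Delta_{k+1}$ the distance squared matrix of $G'$. Then either $i_-(\Delta)=k-1+i_-(\Delta_{k+1})$ or $i_-(\Delta)=k+i_-(\Delta_{k+1})$.
   Context: For a connected graph $G$ with vertices $1,\dots,n$, the distance squared matrix $\Delta$ is the $n\times n$ matrix with $(i,j)$ entry $d_{ij}^2$, where $d_{ij}$ is the graph distance between $i$ and $j$. For a real symmetric matrix $M$, $i_-(M)$ denotes the number of negative eigenvalues of $M$ counted with multiplicity. *)

From mathcomp Require Import all_boot all_order all_algebra.
From mathcomp Require Import polyrcf.
From mathcomp Require Import reals.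
Set Implicit Arguments. Unset Strict Implicit. Unset Printing Implicit Defensive.
Import Order.TTheory GRing.Theory Num.Theory.
Local Open Scope ring_scope.

Definition simple_graph n (e : rel 'I_n) := symmetric e /\ irreflexive e.
Definition connected_graph n (e : rel 'I_n) := forall i j, connect e i j.

Fixpoint reach_le n (e : rel 'I_n) (m : nat) (i j : 'I_n) : bool :=
  if m is m'.+1 then reach_le e m' i j || [exists l, reach_le e m' i l && e l j]
  else i == j.

(* Graph distance: the least m < n with a walk of length <= m from i to j
   (for a connected graph on n vertices this is the usual distance). *)
Definition gdist n (e : rel 'I_n) (i j : 'I_n) : nat :=
  find (fun m => reach_le e m i j) (iota 0 n).

Definition dist_sq_mx (R : nzRingType) n (e : rel 'I_n) : 'M[R]_n :=
  \matrix_(i, j) ((gdist e i j) ^ 2)%:R.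

(* i_-(M): number of negative eigenvalues counted with multiplicity, i.e.
   the sum of the multiplicities of the negative real roots of the
   characteristic polynomial (all eigenvalues of a real symmetric matrix
   are real). *)
Definition neg_inertia (R : rcfType) n (M : 'M[R]_n) : nat :=
  \sum_(x <- rootsR (char_poly M) | x < 0) mup x (char_poly M).

(* G obtained from G' (on 'I_n) by adding k new vertices (indices
   rshift n _ in 'I_(n + k)), each adjacent only to w. *)
Definition add_pendants n (e : rel 'I_n) (w : 'I_n) (k : nat) : rel 'I_(n + k) :=
  fun x y =>
    match split x, split y with
    | inl a, inl b => e a b
    | inl a, inr _ => a == w
    | inr _, inl b => b == w
    | inr _, inr _ => false
    end.
Arguments add_pendants [n] e w k _ _.
Arguments dist_sq_mx R [n] e.

(* Every old vertex is at the same distance from all k pendant vertices, and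
   two distinct pendants are at distance 2.  Hence Delta is the symmetric block
   matrix [[Delta', B], [B^T, 4 (J - I)]] in which all rows of B^T coincide.
   Count negative eigenvalues as the largest dimension of a subspace on which
   the quadratic form is negative definite.  The (k-1)-dimensional space of
   zero-sum vectors supported on the pendants is orthogonal, for the form, to
   the vectors supported on the old vertices and carries the form -4|b|^2; this
   gives i_-(Delta) >= i_-(Delta') + k - 1.  Conversely, a negative definite
   subspace for Delta meets the vectors vanishing on the pendants in codimension
   at most k, so i_-(Delta) <= i_-(Delta') + k.  The count is carried out over
   the complexification, where the spectral theorem is available. *)

From mathcomp Require Import all_boot all_order all_algebra.
From mathcomp Require Import reals.
From mathcomp Require Import polyrcf complex sesquilinear spectral zify.
Set Implicit Arguments. Unset Strict Implicit. Unset Printing Implicit Defensive.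

Section Walks.
Variables (N : nat) (E : rel 'I_N).

Lemma reach_le_mono m m' i j :
  (m <= m')%N -> reach_le E m i j -> reach_le E m' i j.
Proof.
elim: m' => [|m' IH]; first by rewrite leqn0 => /eqP->.
by rewrite leq_eqVlt => /orP[/eqP->//|/IH le_m'] /le_m' /= ->.
Qed.

Lemma reach_le_rcons m i l j :
  reach_le E m i l -> E l j -> reach_le E m.+1 i j.
Proof. by move=> ril Elj /=; apply/orP; right; apply/existsP; exists l; rewrite ril. Qed.

Lemma reach_le_cons m h i j :
  E h i -> reach_le E m i j -> reach_le E m.+1 h j.
Proof.
move=> Ehi; elim: m j => [|m IH] j /=.
  by move=> /eqP<-; exact: (@reach_le_rcons 0 h h i (eqxx h) Ehi).
case/orP=> [rij|/existsP[l /andP[ril Elj]]]; first by apply/orP; left; apply: IH.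
exact: reach_le_rcons (IH _ ril) Elj.
Qed.

Lemma reach_le_sym m i j :
  symmetric E -> reach_le E m i j -> reach_le E m j i.
Proof.
move=> symE; elim: m i j => [|m IH] i j /=; first by rewrite eq_sym.
case/orP=> [rij|/existsP[l /andP[ril Elj]]]; first by apply/orP; left; apply: IH.
by apply: reach_le_cons (IH _ _ ril); rewrite symE.
Qed.

Lemma reach_le_path x p : path E x p -> reach_le E (size p) x (last x p).
Proof.
elim: p x => [|y p IH] x //= /andP[Exy /IH].
exact: reach_le_cons.
Qed.

Lemma connect_reach_le i j :
  connect E i j -> has (fun m => reach_le E m i j) (iota 0 N).
Proof.
move=> /connectP[p /shortenP[p' path_p' uniq_p' _] ->].
apply/hasP; exists (size p'); last exact: reach_le_path path_p'.
have := max_card (mem (i :: p')).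
by rewrite (card_uniqP uniq_p') card_ord mem_iota.
Qed.

Lemma gdistC i j : symmetric E -> gdist E i j = gdist E j i.
Proof. by move=> symE; apply: eq_find => m; apply/idP/idP; apply: reach_le_sym. Qed.

Lemma gdistxx i : gdist E i i = 0%N.
Proof. by rewrite /gdist; case: N E i => [|N'] E' [i lt_iN] //=; rewrite eqxx. Qed.

Lemma gdist_eq d i j : (d < N)%N -> reach_le E d i j ->
  (forall m, (m < d)%N -> ~~ reach_le E m i j) -> gdist E i j = d.
Proof.
move=> lt_dN rd Nrm.
rewrite /gdist -[X in iota 0 X](subnKC (ltnW lt_dN)) iotaD find_cat.
rewrite ifN; last by apply/hasP=> -[m]; rewrite mem_iota => /Nrm/negP.
by rewrite size_iota add0n -(subnSK lt_dN) /= rd addn0.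
Qed.

End Walks.

Section Pendants.
Variables (n k : nat) (e : rel 'I_n) (w : 'I_n).
Local Notation G := (add_pendants e w k).

Lemma split_lshift (a : 'I_n) : split (lshift k a) = inl a.
Proof. exact: (unsplitK (inl _ a)). Qed.

Lemma split_rshift (j : 'I_k) : split (rshift n j) = inr j.
Proof. exact: (unsplitK (inr _ j)). Qed.

Lemma add_pendants_sym : symmetric e -> symmetric G.
Proof. by move=> symE x y; rewrite /add_pendants; case: split; case: split. Qed.

Definition pendant_anchor (x : 'I_(n + k)) : 'I_n :=
  if split x is inl a then a else w.

Definition pendant_depth (x : 'I_(n + k)) : nat :=
  if split x is inl _ then 0 else 1.

Lemma reach_le_add_pendants m a y : reach_le G m (lshift k a) y ->
  (pendant_depth y <= m)%N /\
  reach_le e (m - pendant_depth y) a (pendant_anchor y).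
Proof.
elim: m y => [|m IH] y /=.
  by move=> /eqP<-; rewrite /pendant_depth /pendant_anchor split_lshift.
case/orP=> [/IH[le_ym ray]|/existsP[l /andP[/IH[le_lm ral] Gly]]].
  by split; [exact: leqW | exact: reach_le_mono (leq_sub2r _ (leqnSn m)) ray].
move: le_lm ral Gly; rewrite /pendant_depth /pendant_anchor /add_pendants.
case: (split l) => [l'|jl]; case: (split y) => [y'|jy] //= _.
- by rewrite subn0 => ral' Ely; split; last exact: reach_le_rcons ral' Ely.
- by rewrite subn0 subn1 => ral' /eqP<-.
- move=> ralw /eqP->; split=> //.
  by apply/orP; left; apply: reach_le_mono ralw; exact: leq_subr.
Qed.

Lemma reach_le_lshift m a b :
  reach_le e m a b -> reach_le G m (lshift k a) (lshift k b).
Proof.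
elim: m b => [|m IH] b /=; first by move=> /eqP->.
case/orP=> [/IH->//|/existsP[l /andP[/IH ral Elb]]].
by apply: reach_le_rcons ral _; rewrite /add_pendants !split_lshift.
Qed.

Lemma reach_le_add_pendants_ll m a b :
  reach_le G m (lshift k a) (lshift k b) = reach_le e m a b.
Proof.
apply/idP/idP; last exact: reach_le_lshift.
move=> /reach_le_add_pendants.
by rewrite /pendant_depth /pendant_anchor split_lshift subn0 => -[].
Qed.

Lemma reach_le_add_pendants_lr m a j :
  reach_le G m (lshift k a) (rshift n j) = (0 < m)%N && reach_le e m.-1 a w.
Proof.
apply/idP/andP.
  move=> /reach_le_add_pendants.
  by rewrite /pendant_depth /pendant_anchor split_rshift subn1.
case: m => [|m] [//= _ raw].
apply: reach_le_rcons (reach_le_lshift raw) _.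
by rewrite /add_pendants split_lshift split_rshift.
Qed.

Lemma gdist_add_pendants_ll a b : connected_graph e ->
  gdist G (lshift k a) (lshift k b) = gdist e a b.
Proof.
move=> conn_e; rewrite /gdist iotaD find_cat.
under eq_has do rewrite reach_le_add_pendants_ll.
by rewrite connect_reach_le //; under eq_find do rewrite reach_le_add_pendants_ll.
Qed.

Lemma gdist_add_pendants_lr a j j' :
  gdist G (lshift k a) (rshift n j) = gdist G (lshift k a) (rshift n j').
Proof. by apply: eq_find => m; rewrite !reach_le_add_pendants_lr. Qed.

Lemma add_pendants_rshift j y : G (rshift n j) y = (y == lshift k w).
Proof.
rewrite /add_pendants split_rshift -[in RHS](splitK y).
by case: (split y) => b; rewrite /= ?eq_lshift ?eq_rlshift.
Qed.

Lemma gdist_add_pendants_rr j j' :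
  j != j' -> gdist G (rshift n j) (rshift n j') = 2%N.
Proof.
move=> neq_jj'; apply: gdist_eq.
- move: neq_jj' (ltn_ord w) (ltn_ord j) (ltn_ord j'); rewrite -val_eqE /=; lia.
- apply: (@reach_le_rcons _ _ 1 _ (lshift k w)).
    by apply: (@reach_le_rcons _ _ 0 _ _ _ (eqxx _)); rewrite add_pendants_rshift.
  by rewrite /add_pendants split_lshift split_rshift.
- case=> [|[|//]] _ /=; rewrite eq_rshift (negbTE neq_jj') //=.
  by apply/existsP=> -[l /andP[/eqP<-]]; rewrite add_pendants_rshift eq_rlshift.
Qed.

End Pendants.

Import Order.TTheory GRing.Theory Num.Theory.
Local Open Scope ring_scope.

Section NegativeInertia.
Variable C : numClosedFieldType.
Local Open Scope sesquilinear_scope.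

Definition hform N (H : 'M[C]_N) (x : 'rV[C]_N) : C := (x *m H *m x^t*) 0 0.

Definition neg_definite m N (H : 'M[C]_N) (U : 'M[C]_(m, N)) :=
  forall u : 'rV_m, u != 0 -> hform H (u *m U) < 0.

Definition spec_neg_inertia N (H : 'M[C]_N) : nat :=
  #|[set i | spectral_diag H 0 i < 0]|.

Lemma hermsymmx_ct N (H : 'M[C]_N) : H \is hermsymmx -> H^t* = H.
Proof. by move=> /is_hermitianmxP; rewrite expr0 scale1r => <-. Qed.

Lemma spectral_diag_real N (H : 'M[C]_N) i :
  H \is hermsymmx -> spectral_diag H 0 i \is Num.real.
Proof. by move=> /hermitian_spectral_diag_real /mxOverP; apply. Qed.

Lemma hform_diag N (d : 'rV[C]_N) y :
  hform (diag_mx d) y = \sum_i d 0 i * `|y 0 i| ^+ 2.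
Proof.
rewrite /hform mul_mx_diag mxE; apply: eq_bigr => i _.
by rewrite !mxE normCK mulrAC mulrC.
Qed.

Lemma hform_spectral N (H : 'M[C]_N) y : H \is hermsymmx ->
  hform H (y *m spectralmx H) = \sum_i spectral_diag H 0 i * `|y 0 i| ^+ 2.
Proof.
move=> /hermitian_normalmx /orthomx_spectralP {1}->.
have /unitarymxP PPt := spectral_unitarymx H.
rewrite invmx_unitary ?spectral_unitarymx // -hform_diag /hform trmx_mul map_mxM.
by rewrite !mulmxA -(mulmxA y) PPt mulmx1 -!(mulmxA _ (spectralmx H)) PPt mulmx1.
Qed.

Lemma rowsub1_coord m N (f : 'I_m -> 'I_N) (u : 'rV[C]_m) i : injective f ->
  (u *m rowsub f 1%:M) 0 i = if [pick j | f j == i] is Some j then u 0 j else 0.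
Proof.
move=> inj_f; rewrite mxE.
under eq_bigr do rewrite !mxE mulr_natr mulrb eq_sym.
rewrite -big_mkcond /=; case: pickP => [j /eqP <-|none].
  by rewrite (big_pred1 j) // => j'; rewrite (inj_eq inj_f).
by rewrite big_pred0 // => j; rewrite eq_sym none.
Qed.

Lemma exists_neg_definite N (H : 'M[C]_N) : H \is hermsymmx ->
  exists U : 'M[C]_(spec_neg_inertia H, N), neg_definite H U.
Proof.
move=> hermH; set S := [set i | spectral_diag H 0 i < 0].
exists (rowsub enum_val (spectralmx H)) => u nz_u.
have inj_val : injective (@enum_val _ (mem S)) := @enum_val_inj _ _.
have /rV0Pn[j0 nz_uj0] := nz_u.
rewrite rowsubE mulmxA hform_spectral //.
rewrite (bigD1 (enum_val j0)) //= -[X in _ < X](addr0 0); apply: ltr_leD.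
  rewrite rowsub1_coord //; case: pickP => [j /eqP /inj_val ->|/(_ j0)].
    rewrite nmulr_rlt0 ?exprn_gt0 ?normr_gt0 //.
    by have := enum_valP j0; rewrite inE.
  by rewrite eqxx.
apply: sumr_le0 => i _; rewrite rowsub1_coord //; case: pickP => [j /eqP <-|_].
  rewrite mulr_le0_ge0 ?exprn_ge0 ?normr_ge0 // ltW //.
  by have := enum_valP j; rewrite inE.
by rewrite normr0 expr0n mulr0.
Qed.

Lemma neg_definite_le m N (H : 'M[C]_N) (U : 'M[C]_(m, N)) :
  H \is hermsymmx -> neg_definite H U -> (m <= spec_neg_inertia H)%N.
Proof.
move=> hermH negU; rewrite leqNgt; apply/negP => lt_Sm.
set S := [set i | spectral_diag H 0 i < 0] in lt_Sm.
set P := spectralmx H; pose f := @enum_val _ (mem S).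
(* As [m > #|S|], some [u *m U] has no component along the negative eigenvectors. *)
have /rowV0Pn[u /sub_kermxP uK nz_u] : kermx (U *m P^t* *m colsub f 1%:M) != 0.
  by rewrite kermx_eq0 /row_free neq_ltn (leq_ltn_trans (rank_leq_col _)).
set y := u *m U *m P^t*.
have yS i : i \in S -> y 0 i = 0.
  have ySf : colsub f y = 0 by rewrite -(mulmx1 y) -mulmx_colsub /y -uK !mulmxA.
  move=> Si; move/rowP: ySf => /(_ (enum_rank_in Si i)).
  by rewrite !mxE /f enum_rankK_in.
have uUE : u *m U = y *m P.
  have := spectral_unitarymx H; rewrite -trmxC_unitary => /unitarymxP.
  by rewrite trmxCK /y -mulmxA => ->; rewrite mulmx1.
suff: 0 <= hform H (u *m U) by move/le_lt_trans/(_ (negU u nz_u)); rewrite ltxx.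
rewrite uUE hform_spectral //; apply: sumr_ge0 => i _.
have [Si|nSi] := boolP (i \in S).
  by rewrite yS // normr0 expr0n mulr0.
rewrite mulr_ge0 ?exprn_ge0 ?normr_ge0 //.
by move: nSi; rewrite inE -real_leNgt ?spectral_diag_real.
Qed.

Lemma hform0 N (H : 'M[C]_N) : hform H 0 = 0.
Proof. by rewrite /hform !mul0mx mxE. Qed.

Lemma hermsymmx_ulsub n1 n2 (H : 'M[C]_(n1 + n2)) :
  H \is hermsymmx -> ulsubmx H \is hermsymmx.
Proof.
move=> hermH; apply/is_hermitianmxP.
by rewrite expr0 scale1r trmx_ulsub map_ulsubmx hermsymmx_ct.
Qed.

Lemma hermsymmx_ursub n1 n2 (H : 'M[C]_(n1 + n2)) :
  H \is hermsymmx -> ursubmx H = (dlsubmx H)^t*.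
Proof. by move=> /hermsymmx_ct {1}<-; rewrite -map_ursubmx -trmx_dlsub. Qed.

Lemma hform_row_mx n1 n2 (H : 'M[C]_(n1 + n2)) a b :
  H \is hermsymmx -> b *m dlsubmx H = 0 ->
  hform H (row_mx a b) = hform (ulsubmx H) a + hform (drsubmx H) b.
Proof.
move=> hermH bD0; rewrite /hform -{1}(submxK H) mul_row_block tr_row_mx.
rewrite map_col_mx mul_row_col hermsymmx_ursub // bD0 addr0 mulmxDl.
rewrite -(mulmxA a ((dlsubmx H)^t*)) -map_mxM -trmx_mul bD0 trmx0 map_mx0 mulmx0.
by rewrite add0r mxE.
Qed.

Lemma spec_neg_inertia_le_ulsub n1 n2 (H : 'M[C]_(n1 + n2)) :
  H \is hermsymmx -> (spec_neg_inertia H <= spec_neg_inertia (ulsubmx H) + n2)%N.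
Proof.
move=> hermH; have [U negU] := exists_neg_definite hermH.
set K := row_base (kermx (rsubmx U)).
suff : (\rank (kermx (rsubmx U)) <= spec_neg_inertia (ulsubmx H))%N.
  by rewrite mxrank_ker; have := rank_leq_col (rsubmx U); lia.
apply: (neg_definite_le (U := K *m lsubmx U)) => [|v nz_v].
  exact: hermsymmx_ulsub.
have nz_vK : v *m K != 0 by rewrite mulmx_free_eq0 ?row_base_free.
have vKr : rsubmx (v *m K *m U) = 0.
  rewrite -mulmx_rsub; apply/sub_kermxP.
  by rewrite (submx_trans (submxMl _ _)) ?eq_row_base.
have := negU _ nz_vK; rewrite -[v *m K *m U]hsubmxK vKr hform_row_mx ?mul0mx //.
by rewrite hform0 addr0 -mulmx_lsub (mulmxA v K).
Qed.

Lemma spec_neg_inertia_ge_ulsub n1 n2 m (H : 'M[C]_(n1 + n2)) (W : 'M[C]_(m, n2)) :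
  H \is hermsymmx -> W *m dlsubmx H = 0 -> neg_definite (drsubmx H) W ->
  (spec_neg_inertia (ulsubmx H) + m <= spec_neg_inertia H)%N.
Proof.
move=> hermH WD0 negW.
have [U negU] := exists_neg_definite (hermsymmx_ulsub hermH).
apply: (neg_definite_le (U := block_mx U 0 0 W)) => // u nz_u.
rewrite -(hsubmxK u) mul_row_block !mulmx0 addr0 add0r.
rewrite hform_row_mx //; last by rewrite -mulmxA WD0 mulmx0.
have [l0|nz_l] := eqVneq (lsubmx u) 0.
  rewrite l0 mul0mx hform0 add0r; apply: negW; apply: contraNneq nz_u => r0.
  by rewrite -(hsubmxK u) l0 r0 row_mx0.
rewrite -[X in _ < X](addr0 0) ltr_leD ?negU //.
have [->|nz_r] := eqVneq (rsubmx u) 0; first by rewrite mul0mx hform0.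
exact/ltW/negW.
Qed.

Lemma mul_const_rows p q (b : 'rV[C]_p) (A : 'M[C]_(p, q)) :
  \sum_i b 0 i = 0 -> (forall i i', row i A = row i' A) -> b *m A = 0.
Proof.
case: p b A => [|p] b A sum_b0 rowsA; first by rewrite thinmx0 mul0mx.
apply/rowP => j; have Aj i : A i j = A ord0 j.
  by have /rowP/(_ j) := rowsA i ord0; rewrite !mxE.
by rewrite !mxE; under eq_bigr do rewrite Aj; rewrite -mulr_suml sum_b0 mul0r.
Qed.

Lemma hform_offdiag_const p (c : C) (b : 'rV[C]_p) : \sum_i b 0 i = 0 ->
  hform (c *: (const_mx 1 - 1%:M)) b = - c * \sum_i `|b 0 i| ^+ 2.
Proof.
move=> sum_b0; have bJ : b *m (const_mx 1 : 'M_p) = 0.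
  by apply: mul_const_rows => // i i'; apply/rowP => j; rewrite !mxE.
rewrite /hform -scalemxAr mulmxBr bJ mulmx1 sub0r -scalemxAl mulNmx mxE mxE.
rewrite mulrN -mulNr mxE; congr (_ * _); apply: eq_bigr => i _.
by rewrite !mxE normCK.
Qed.

Definition zero_sum_basis k : 'M[C]_(k, k.+1) :=
  \matrix_(j, i) ((i == ord0)%:R - (i == lift ord0 j)%:R).

Lemma zero_sum_basis_coord k (u : 'rV[C]_k) i : (u *m zero_sum_basis k) 0 i =
  if unlift ord0 i is Some j then - u 0 j else \sum_j u 0 j.
Proof.
rewrite mxE; under eq_bigr do rewrite mxE mulrBr !mulr_natr !mulrb.
rewrite sumrB; case: unliftP => [j ->|->]; last first.
  by rewrite eqxx [X in _ - X]big1 ?subr0 // => j _; rewrite eq_sym neq_lift.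
rewrite eq_sym (negbTE (neq_lift _ _)) big1 // sub0r; congr (- _).
by rewrite -big_mkcond (big_pred1 j) // => j'; rewrite (inj_eq lift_inj) eq_sym.
Qed.

Lemma zero_sum_basis_sum k (u : 'rV[C]_k) : \sum_i (u *m zero_sum_basis k) 0 i = 0.
Proof.
rewrite big_ord_recl zero_sum_basis_coord unlift_none addrC.
under eq_bigr do rewrite zero_sum_basis_coord liftK.
by rewrite sumrN addNr.
Qed.

Lemma neg_definite_offdiag k (c : C) :
  0 < c -> neg_definite (c *: (const_mx 1 - 1%:M)) (zero_sum_basis k).
Proof.
move=> c_gt0 u /rV0Pn[j0 nz_uj0].
rewrite hform_offdiag_const ?zero_sum_basis_sum // mulNr oppr_lt0 mulr_gt0 //.
have sq_ge0 i : 0 <= `|(u *m zero_sum_basis k) 0 i| ^+ 2 by rewrite exprn_ge0.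
rewrite lt0r sumr_ge0 // andbT psumr_neq0 //.
apply/hasP; exists (lift ord0 j0); rewrite ?mem_index_enum //=.
by rewrite zero_sum_basis_coord liftK exprn_gt0 // normr_gt0 oppr_eq0.
Qed.

Lemma spec_neg_inertia_pendants n1 k (H : 'M[C]_(n1 + k.+1)) (c : C) :
  H \is hermsymmx -> 0 < c ->
  (forall j j', row j (dlsubmx H) = row j' (dlsubmx H)) ->
  drsubmx H = c *: (const_mx 1 - 1%:M) ->
  (spec_neg_inertia (ulsubmx H) + k <= spec_neg_inertia H
     <= spec_neg_inertia (ulsubmx H) + k.+1)%N.
Proof.
move=> hermH c_gt0 rowsD drH; rewrite spec_neg_inertia_le_ulsub // andbT.
apply: spec_neg_inertia_ge_ulsub => //; last by rewrite drH; exact: neg_definite_offdiag.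
apply/row_matrixP => j; rewrite row_mul rowE row0.
by rewrite mul_const_rows ?zero_sum_basis_sum.
Qed.

End NegativeInertia.

Lemma char_poly_similar (F : fieldType) n (P A : 'M[F]_n) : P \in unitmx ->
  char_poly (invmx P *m A *m P) = char_poly A.
Proof.
move=> unitP; rewrite /char_poly.
set Q := map_mx polyC P; set Qi := map_mx polyC (invmx P).
have QiQ : Qi *m Q = 1%:M by rewrite -map_mxM mulVmx // map_mx1.
have -> : char_poly_mx (invmx P *m A *m P) = Qi *m char_poly_mx A *m Q.
  rewrite /char_poly_mx mulmxBr mulmxBl !map_mxM -/Q -/Qi.
  by rewrite scalar_mxC -(mulmxA _ Qi Q) QiQ mulmx1.
by rewrite !det_mulmx mulrAC -det_mulmx QiQ det1 mul1r.
Qed.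

Lemma sum_mup_prod_XsubC (R : rcfType) (s : seq R) (P : pred R) :
  let p := \prod_(y <- s) ('X - y%:P) in
  (\sum_(x <- rootsR p | P x) mup x p)%N = count P s.
Proof.
move=> p; have nz_p : p != 0 by rewrite monic_neq0 // monic_prod_XsubC.
rewrite (perm_big (undup s)); last first.
  apply: uniq_perm; rewrite ?undup_uniq ?uniq_roots // => x.
  by rewrite mem_undup -(roots_on_rootsR nz_p x) root_prod_XsubC in_itv.
under eq_bigr do rewrite mu_prod_XsubC.
rewrite -sum1_count -(big_undup_iterop_count addn s P (fun=> 1%N)).
apply: eq_bigr => x _; case: (count_mem x s) => // c.
by rewrite iteropS iter_addn mul1n addn1.
Qed.

Local Open Scope sesquilinear_scope.

Lemma hermsymmx_real_complex (R : rcfType) N (A : 'M[R]_N) :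
  A^T = A -> map_mx (real_complex R) A \is hermsymmx.
Proof.
move=> symA; apply/is_hermitianmxP; rewrite expr0 scale1r.
by apply/matrixP => i j; rewrite !mxE -[in RHS]symA mxE conj_Creal // complex_real.
Qed.

Lemma neg_inertia_spectral (R : rcfType) N (A : 'M[R]_N) :
  A^T = A -> neg_inertia A = spec_neg_inertia (map_mx (real_complex R) A).
Proof.
move=> /hermsymmx_real_complex hermA; set H := map_mx _ A in hermA *.
have /hermitian_normalmx /orthomx_spectralP H_spec := hermA.
pose r i := complex.Re (spectral_diag H 0 i).
have dE i : spectral_diag H 0 i = (r i)%:C%C by rewrite /r RRe_real ?spectral_diag_real.
rewrite /neg_inertia.
have -> : char_poly A = \prod_(x <- [seq r i | i <- index_enum 'I_N]) ('X - x%:P).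
  apply: (@map_poly_inj _ _ (real_complex R)).
  rewrite map_char_poly -/H H_spec char_poly_similar ?spectral_unit //.
  rewrite char_poly_trig ?diag_mx_is_trig // map_prod_XsubC big_map.
  by apply: eq_bigr => i _; rewrite mxE eqxx mulr1n dE.
rewrite sum_mup_prod_XsubC /spec_neg_inertia cardsE -sum1_card.
rewrite -sum1_count big_map; apply: eq_bigl => i.
by rewrite unfold_in /= dE /ltc /= eqxx.
Qed.

Lemma dist_sq_mx_sym (R : nzRingType) N (E : rel 'I_N) :
  symmetric E -> (dist_sq_mx R E)^T = dist_sq_mx R E.
Proof. by move=> symE; apply/matrixP => i j; rewrite !mxE gdistC. Qed.

Theorem corollary3p2 (R : realType) (n k : nat) (e : rel 'I_n) (w : 'I_n) :
  simple_graph e -> connected_graph e -> (2 <= k)%N ->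
  let Delta := dist_sq_mx R (add_pendants e w k) in
  let Delta' := dist_sq_mx R e in
  neg_inertia Delta = (k - 1 + neg_inertia Delta')%N \/
  neg_inertia Delta = (k + neg_inertia Delta')%N.
Proof.
move=> [symE _] conn_e; case: k => [|[|k]] // _ Delta Delta'.
have symG := add_pendants_sym (k := k.+2) w symE.
set H := map_mx (real_complex R) Delta.
have ulH : ulsubmx H = map_mx (real_complex R) Delta'.
  by apply/matrixP => a b; rewrite !mxE gdist_add_pendants_ll.
have rowsH j j' : row j (dlsubmx H) = row j' (dlsubmx H).
  apply/rowP => a; rewrite !mxE !(gdistC (rshift n _) _ symG).
  by rewrite (gdist_add_pendants_lr _ _ _ j j').
have drH : drsubmx H = 4%:R *: (const_mx 1 - 1%:M).
  apply/matrixP => j j'; rewrite !mxE.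
  have [->|ne_jj'] := eqVneq j j'; first by rewrite gdistxx subrr mulr0.
  by rewrite gdist_add_pendants_rr // subr0 mulr1 rmorph_nat.
have := spec_neg_inertia_pendants (hermsymmx_real_complex (dist_sq_mx_sym R symG))
  (ltr0n _ 4) rowsH drH.
rewrite ulH -!neg_inertia_spectral ?dist_sq_mx_sym // -/Delta -/Delta'.
by move=> /andP[]; lia.
Qed.
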